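(* There is a finite set $D$ and an infinite set $\Gamma \subseteq \mathbf{\Phi}_D$ of weighted relations such that $\mathrm{Imp}(\mathrm{wPol}(\Gamma)) \neq \mathrm{wRelClone}(\Gamma)$.
   Context: Let $\overline{\mathbb{Q}}=\mathbb{Q}\cup\{\infty\}$. An $m$-ary weighted relation on a finite set $D$ ($m\ge1$) is a map $\gamma:D^m\to\overline{\mathbb{Q}}$; $\mathbf{\Phi}_D$ denotes the set of all weighted relations on $D$. $\mathrm{Feas}(\gamma)=\{\mathbf{x}\in D^m:\gamma(\mathbf{x})<\infty\}$. $\phi_=$ is the binary equality relation ($0$ if $x=y$, $\infty$ otherwise) and $\phi_\emptyset$ is the unary relation that is $\infty$ everywhere. A weighted relation $\gamma$ of arity $r$ is obtained by addition from $\gamma_1$ (arity $s$) and $\gamma_2$ (arity $t$) if $\gamma(x_1,\dots,x_r)=\gamma_1(y_1,\dots,y_s)+\gamma_2(z_1,\dots,z_t)$ for some fixed choice of the $y_i,z_j$ among $x_1,\dots,x_r$; it is obtained by minimisation from $\gamma'$ of arity $r+s$ if $\gamma(x_1,\dots,x_r)=\min_{(y_1,\dots,y_s)\in D^s}\gamma'(x_1,\dots,x_r,y_1,\dots,y_s)$. A set $\Gamma\subseteq\mathbf{\Phi}_D$ is a weighted relational clone if it contains $\phi_=$ and $\phi_\emptyset$ and is closed under addition, minimisation, scaling by non-negative rational constants (with $0\cdot\infty=\infty$) and addition of rational constants; $\mathrm{wRelClone}(\Gamma)$ is the smallest weighted relational clone containing $\Gamma$. A $k$-ary operation is a map $f:D^k\to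 D$, applied to tuples coordinatewise. $f$ is a polymorphism of $\gamma$ if $f(\mathbf{x}_1,\dots,\mathbf{x}_k)\in\mathrm{Feas}(\gamma)$ whenever all $\mathbf{x}_i\in\mathrm{Feas}(\gamma)$; $\mathrm{Pol}(\Gamma)$ is the set of common polymorphisms of all $\gamma\in\Gamma$. Projections are $e^{(k)}_i(x_1,\dots,x_k)=x_i$. A clone is a set of operations containing all projections and closed under superposition ($f[g_1,\dots,g_k](\mathbf{x})=f(g_1(\mathbf{x}),\dots,g_k(\mathbf{x}))$); $C^{(k)}$ denotes its $k$-ary members. A $k$-ary weighting of a clone $C$ is a function $\omega:C^{(k)}\to\mathbb{Q}$ with $\sum_{f\in C^{(k)}}\omega(f)=0$ and $\omega(f)<0$ only if $f$ is a projection. It is a weighted polymorphism of $\gamma$ ($\gamma$ is improved by $\omega$) if $C\subseteq\mathrm{Pol}(\gamma)$ and for all $\mathbf{x}_1,\dots,\mathbf{x}_k\in\mathrm{Feas}(\gamma)$, $\sum_{f\in C^{(k)}}\omega(f)\gamma(f(\mathbf{x}_1,\dots,\mathbf{x}_k))\le0$. $\mathrm{wPol}(\Gamma)$ is the set of all weightings of the clone $\mathrm{Pol}(\Gamma)$ that are weighted polymorphisms of every $\gamma\in\Gamma$; $\mathrm{Imp}(\Omega)$ is the set of weighted relations in $\mathbf{\Phi}_D$ improved by every $\omega\in\Omega$. *)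

From mathcomp Require Import all_boot all_order all_algebra.
From mathcomp Require Import boolp classical_sets cardinality.
Set Implicit Arguments. Unset Strict Implicit. Unset Printing Implicit Defensive.
Import Order.TTheory GRing.Theory Num.Theory.
Local Open Scope classical_set_scope.
Local Open Scope ring_scope.

(* Qbar = Q u {oo}; None stands for oo. *)
Definition Qbar := option rat.

Definition qadd (a b : Qbar) : Qbar :=
  match a, b with Some p, Some q => Some (p + q) | _, _ => None end.
Definition qmin (a b : Qbar) : Qbar :=
  match a, b with
  | None, _ => b | _, None => a
  | Some p, Some q => Some (Num.min p q) end.
(* scaling by a non-negative rational, with 0 * oo = oo *)
Definition qscale (c : rat) (a : Qbar) : Qbar :=
  match a with Some p => Some (c * p) | None => None end.

Record wrel (D : finType) := WRel {
  wr_ar : nat;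
  wr_pos : (0 < wr_ar)%N;
  wr_fn :> {ffun wr_ar.-tuple D -> Qbar} }.
Arguments WRel {D wr_ar} wr_pos wr_fn.

Definition feas (D : finType) (g : wrel D) (x : (wr_ar g).-tuple D) : bool :=
  g x != None.

Definition phi_eq (D : finType) : wrel D :=
  @WRel D 2 isT [ffun x : 2.-tuple D =>
    if tnth x ord0 == tnth x ord_max then Some 0 else None].
Definition phi_empty (D : finType) : wrel D :=
  @WRel D 1 isT [ffun _ : 1.-tuple D => None].

Definition reidx (D : finType) r s (x : r.-tuple D) (sigma : 'I_s -> 'I_r)
  : s.-tuple D := [tuple tnth x (sigma i) | i < s].

Definition closed_add (D : finType) (C : set (wrel D)) : Prop :=
  forall (g1 g2 : wrel D) (r : nat) (hr : (0 < r)%N)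
         (sigma : 'I_(wr_ar g1) -> 'I_r) (tau : 'I_(wr_ar g2) -> 'I_r),
    C g1 -> C g2 ->
    C (WRel hr [ffun x : r.-tuple D =>
         qadd (g1 (reidx x sigma)) (g2 (reidx x tau))]).

Definition closed_min (D : finType) (C : set (wrel D)) : Prop :=
  forall (r s : nat) (hr : (0 < r)%N) (hrs : (0 < r + s)%N)
         (g : {ffun (r + s).-tuple D -> Qbar}),
    C (WRel hrs g) ->
    C (WRel hr [ffun x : r.-tuple D =>
         \big[qmin/None]_(y : s.-tuple D) g (cat_tuple x y)]).

Definition closed_scale (D : finType) (C : set (wrel D)) : Prop :=
  forall (g : wrel D) (c : rat), 0 <= c -> C g ->
    C (WRel (wr_pos g) [ffun x => qscale c (g x)]).

Definition closed_addconst (D : finType) (C : set (wrel D)) : Prop :=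
  forall (g : wrel D) (c : rat), C g ->
    C (WRel (wr_pos g) [ffun x => qadd (g x) (Some c)]).

Definition is_wrelclone (D : finType) (C : set (wrel D)) : Prop :=
  [/\ C (phi_eq D), C (phi_empty D), closed_add C,
      closed_min C & (closed_scale C /\ closed_addconst C)].

Definition wRelClone (D : finType) (Gamma : set (wrel D)) : set (wrel D) :=
  fun g => forall C, is_wrelclone C -> Gamma `<=` C -> C g.

Definition op (D : finType) (k : nat) := {ffun k.-tuple D -> D}.

Definition apply_op (D : finType) k m (f : op D k) (xs : k.-tuple (m.-tuple D))
  : m.-tuple D :=
  [tuple f [tuple tnth (tnth xs i) j | i < k] | j < m].

Definition is_pol (D : finType) k (f : op D k) (g : wrel D) : Prop :=
  forall xs : k.-tuple ((wr_ar g).-tuple D),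
    (forall i, feas (tnth xs i)) -> feas (apply_op f xs).

Definition Pol (D : finType) (Gamma : set (wrel D)) : forall k, set (op D k) :=
  fun k f => forall g, Gamma g -> is_pol f g.

Definition is_proj (D : finType) k (f : op D k) : Prop :=
  exists i : 'I_k, forall x, f x = tnth x i.

(* A k-ary weighting of the clone C: a rational function on C^(k);
   it is represented by a function on all k-ary operations that vanishes
   outside C^(k). *)
Record weighting (D : finType) := Weighting {
  w_clone : forall k, set (op D k);
  w_ar : nat;
  w_fn : {ffun op D w_ar -> rat} }.

Definition is_weighting (D : finType) (C : forall k, set (op D k)) (k : nat)
  (w : {ffun op D k -> rat}) : Prop :=
  [/\ (0 < k)%N,
      (forall f, ~ C k f -> w f = 0),
      \sum_(f : op D k | `[< C k f >]) w f = 0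
    & forall f, C k f -> w f < 0 -> is_proj f].

(* omega is a weighted polymorphism of g; on feasible inputs and f in C^(k)
   subset Pol(g), g (f(xs)) is finite, so odflt 0 only reads finite values. *)
Definition improves (D : finType) (C : forall k, set (op D k)) (k : nat)
  (w : {ffun op D k -> rat}) (g : wrel D) : Prop :=
  (forall k' (f : op D k'), (0 < k')%N -> C k' f -> is_pol f g) /\
  forall xs : k.-tuple ((wr_ar g).-tuple D),
    (forall i, feas (tnth xs i)) ->
    \sum_(f : op D k | `[< C k f >]) w f * odflt 0 (g (apply_op f xs)) <= 0.

Definition wPol (D : finType) (Gamma : set (wrel D)) : set (weighting D) :=
  fun om => [/\ w_clone om = Pol Gamma,
               is_weighting (Pol Gamma) (w_fn om)
             & forall g, Gamma g -> improves (Pol Gamma) (w_fn om) g].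

Definition Imp (D : finType) (Om : set (weighting D)) : set (wrel D) :=
  fun g => forall om, Om om -> improves (w_clone om) (w_fn om) g.

From mathcomp Require Import all_boot all_order all_algebra.
From mathcomp Require Import boolp classical_sets cardinality.
Set Implicit Arguments. Unset Strict Implicit. Unset Printing Implicit Defensive.
Import Order.TTheory GRing.Theory Num.Theory.
Local Open Scope classical_set_scope.
Local Open Scope ring_scope.

(* Take D = {0,1,2}, G = [x = 2], H = [x = 1] and Gamma = {(n+1) G + H | n in N}.
   If a weighting improves every member of Gamma, then (n+1) A + B <= 0 for all n,
   where A and B are its weighted sums of G and H; hence A <= 0, so G lies in
   Imp(wPol(Gamma)).  On the other hand, for p = (0 |-> 0, 1,2 |-> 2) and q = 0,
   the relations g with  a g(p x) + (1 - a) g(q x) <= g(x)  for all small enough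
   a > 0 form a weighted relational clone.  It contains (n+1) G + H (for
   a <= 1/(n+1)) but not G (look at x = 1), so G is not in wRelClone(Gamma).
   No single a works for the whole family, which is why Gamma must be infinite. *)

Lemma infinite_range_inj (T : Type) (f : nat -> T) :
  injective f -> ~ finite_set (range f).
Proof.
move=> f_inj fin; apply: infinite_nat.
have /(card_eqPle _ _).1[_ le_f] : (range f #= [set: nat])%card.
  by apply: inj_card_eq => x y _ _; apply: f_inj.
exact: card_le_finite le_f fin.
Qed.

Lemma reidx_map_tuple (T : finType) r s (x : r.-tuple T) (sigma : 'I_s -> 'I_r)
    (f : T -> T) :
  reidx (map_tuple f x) sigma = map_tuple f (reidx x sigma).
Proof. by apply: eq_from_tnth => i; rewrite !tnth_map !tnth_ord_tuple. Qed.

Lemma map_cat_tuple (T U : Type) r s (x : r.-tuple T) (y : s.-tuple T)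
    (f : T -> U) :
  map_tuple f (cat_tuple x y) = cat_tuple (map_tuple f x) (map_tuple f y).
Proof. by apply: val_inj; rewrite /= map_cat. Qed.

Lemma bigqmin_Some (T : Type) (s : seq T) (F : T -> Qbar) m :
  \big[qmin/None]_(y <- s) F y = Some m -> exists y, F y = Some m.
Proof.
elim: s m => [|z s IH] m; first by rewrite big_nil.
rewrite big_cons; case Fz: (F z) => [p|]; last exact: IH.
case: (\big[qmin/None]_(y <- s) F y) (IH) => [q|] IHq /= [<-]; last by exists z.
by case: leP => _; [exists z | apply: IHq].
Qed.

Lemma bigqmin_le (T : eqType) (s : seq T) (F : T -> Qbar) y u :
  y \in s -> F y = Some u ->
  exists2 m, \big[qmin/None]_(y <- s) F y = Some m & m <= u.
Proof.
elim: s => [|z s IH] //; rewrite in_cons big_cons => /orP[/eqP <-|ys] Fy.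
  rewrite Fy; case: (\big[qmin/None]_(y0 <- s) F y0) => [q|] /=.
    by exists (Num.min u q); rewrite ?ge_min ?lexx.
  by exists u.
have [m -> mu] := IH ys Fy.
case: (F z) => [p|] /=; last by exists m.
by exists (Num.min p m); rewrite ?ge_min ?mu ?orbT.
Qed.

Section UnaryMix.
Variables (D : finType) (p q : D -> D).

Definition mix_improves (a : rat) (g : wrel D) : Prop :=
  forall x : (wr_ar g).-tuple D, feas x ->
  [/\ feas (map_tuple p x), feas (map_tuple q x) &
      a * odflt 0 (g (map_tuple p x)) + (1 - a) * odflt 0 (g (map_tuple q x))
        <= odflt 0 (g x)].

Section FixedWeight.
Variable a : rat.
Hypotheses (a_ge0 : 0 <= a) (a_le1 : a <= 1).

Lemma mix_improves_eq : mix_improves a (phi_eq D).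
Proof.
move=> x; rewrite /feas /= !ffunE !tnth_map.
case: (tnth x ord0 =P tnth x ord_max) => [-> _|//]; rewrite !eqxx /=.
by split=> //; rewrite !mulr0 addr0.
Qed.

Lemma mix_improves_empty : mix_improves a (phi_empty D).
Proof. by move=> x; rewrite /feas /= ffunE. Qed.

Lemma mix_improves_add : closed_add (mix_improves a).
Proof.
move=> g1 g2 r hr sigma tau H1 H2 x; rewrite /feas /= !ffunE !reidx_map_tuple.
case E1: (g1 (reidx x sigma)) => [u1|] //; case E2: (g2 (reidx x tau)) => [u2|] //= _.
have [] := H1 (reidx x sigma); first by rewrite /feas E1.
have [] := H2 (reidx x tau); first by rewrite /feas E2.
rewrite /feas E1 E2.
case: (g1 (map_tuple p _)) => [v1|] //; case: (g1 (map_tuple q _)) => [w1|] //.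
case: (g2 (map_tuple p _)) => [v2|] //; case: (g2 (map_tuple q _)) => [w2|] //=.
move=> _ _ le2 _ _ le1; split=> //.
rewrite mulrDr [X in _ + X]mulrDr addrACA.
exact: lerD.
Qed.

Lemma mix_improves_min : closed_min (mix_improves a).
Proof.
move=> r s hr hrs g H x; rewrite /feas /= !ffunE.
case B: (\big[qmin/None]_(y : s.-tuple D) g (cat_tuple x y)) => [v|] // _.
have [y Ey] := bigqmin_Some B.
have [] := H (cat_tuple x y); first by rewrite /feas /= Ey.
rewrite /feas /= !map_cat_tuple Ey /=.
case Ep: (g (cat_tuple (map_tuple p x) (map_tuple p y))) => [u1|] //.
case Eq: (g (cat_tuple (map_tuple q x) (map_tuple q y))) => [u2|] //= _ _ le_u.
have [m1 -> m1u] := bigqmin_le (F := g \o cat_tuple (map_tuple p x)) (mem_index_enum _) Ep.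
have [m2 -> m2u] := bigqmin_le (F := g \o cat_tuple (map_tuple q x)) (mem_index_enum _) Eq.
split=> //=; apply: le_trans le_u.
by apply: lerD; apply: ler_wpM2l; rewrite ?subr_ge0.
Qed.

Lemma mix_improves_scale : closed_scale (mix_improves a).
Proof.
move=> g c c_ge0 H x; rewrite /feas /= !ffunE.
case E: (g x) => [u|] // _.
have [] := H x; first by rewrite /feas E.
rewrite /feas E.
case: (g (map_tuple p x)) => [v|] //; case: (g (map_tuple q x)) => [w|] //= _ _ le_u.
split=> //; rewrite mulrCA [X in _ + X]mulrCA -mulrDr.
exact: ler_wpM2l.
Qed.

Lemma mix_improves_addconst : closed_addconst (mix_improves a).
Proof.
move=> g c H x; rewrite /feas /= !ffunE.
case E: (g x) => [u|] // _.
have [] := H x; first by rewrite /feas E.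
rewrite /feas E.
case: (g (map_tuple p x)) => [v|] //; case: (g (map_tuple q x)) => [w|] //= _ _ le_u.
split=> //; rewrite !mulrDr addrACA -mulrDl [a + _]addrC subrK mul1r.
by rewrite lerD2r.
Qed.

Lemma mix_improves_clone : is_wrelclone (mix_improves a).
Proof.
split; [exact: mix_improves_eq | exact: mix_improves_empty
       | exact: mix_improves_add | exact: mix_improves_min | ].
by split; [exact: mix_improves_scale | exact: mix_improves_addconst].
Qed.

End FixedWeight.

Definition near0_mix_improves (g : wrel D) : Prop :=
  exists2 e : rat, 0 < e <= 1 & forall a, 0 <= a <= e -> mix_improves a g.

Lemma near0_mix_improvesW (g g' : wrel D) :
  (forall a, 0 <= a <= 1 -> mix_improves a g -> mix_improves a g') ->
  near0_mix_improves g -> near0_mix_improves g'.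
Proof.
move=> gg' [e e01 ge]; exists e => // a /andP[a0 ae]; apply: gg'.
  by rewrite a0 (le_trans ae) //; case/andP: e01.
by apply: ge; rewrite a0.
Qed.

Lemma near0_mix_improves_clone : is_wrelclone near0_mix_improves.
Proof.
have near0_of_all (g : wrel D) :
    (forall a, 0 <= a <= 1 -> mix_improves a g) -> near0_mix_improves g.
  by move=> all_g; exists 1 => //; rewrite ltr01 lexx.
have clone_a a : 0 <= a <= 1 -> is_wrelclone (mix_improves a).
  by case/andP=> a0 a1; apply: mix_improves_clone.
split.
- by apply: near0_of_all => a /clone_a[].
- by apply: near0_of_all => a /clone_a[].
- move=> g1 g2 r hr sigma tau.
  move=> [e1 /andP[e1_gt0 e1_le1] H1] [e2 /andP[e2_gt0 e2_le1] H2].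
  exists (Num.min e1 e2); first by rewrite lt_min e1_gt0 e2_gt0 ge_min e1_le1.
  move=> a /andP[a0]; rewrite le_min => /andP[ae1 ae2].
  have /clone_a[_ _ add_a _ _] : 0 <= a <= 1 by rewrite a0 (le_trans ae1).
  by apply: add_a; [apply: H1 | apply: H2]; rewrite a0.
- move=> r s hr hrs g; apply: near0_mix_improvesW => a /clone_a[_ _ _ min_a _].
  exact: min_a.
split.
- move=> g c c0; apply: near0_mix_improvesW => a /clone_a[_ _ _ _ [scale_a _]].
  exact: scale_a.
- move=> g c; apply: near0_mix_improvesW => a /clone_a[_ _ _ _ [_ addc_a]].
  exact: addc_a.
Qed.

End UnaryMix.

Lemma natmul_bounded_le0 (R : archiFieldType) (A B : R) :
  (forall n : nat, n.+1%:R * A + B <= 0) -> A <= 0.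
Proof.
move=> bounded; rewrite leNgt; apply/negP => A_gt0.
pose n := Num.Def.archi_bound (`|B| / A).
have := archi_boundP (divr_ge0 (normr_ge0 B) (ltW A_gt0)).
rewrite -/n ltr_pdivrMr // => lt_nA.
have : `|B| < n.+1%:R * A.
  by apply: lt_le_trans lt_nA _; rewrite ler_wpM2r ?ler_nat // ltW.
rewrite ltr_norml -subr_gt0 opprK addrC => /andP[gt0 _].
by rewrite ltNge bounded in gt0.
Qed.

Definition unary_wrel (D : finType) (F : D -> rat) : wrel D :=
  @WRel D 1 isT [ffun x : 1.-tuple D => Some (F (tnth x ord0))].

Definition affine_family (D : finType) (G H : D -> rat) (n : nat) : wrel D :=
  unary_wrel (fun t => n.+1%:R * G t + H t).

Lemma mix_improves_unary (D : finType) (p q : D -> D) (a : rat) (F : D -> rat) :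
  mix_improves p q a (unary_wrel F) <->
  (forall t, a * F (p t) + (1 - a) * F (q t) <= F t).
Proof.
split=> [improves_F t | le_F x _].
  by have [] := improves_F [tuple t]; rewrite /feas /= !ffunE.
by rewrite /feas /= !ffunE !tnth_map; split=> //=; apply: le_F.
Qed.

Lemma affine_family_inj (D : finType) (G H : D -> rat) (t : D) :
  G t != 0 -> injective (affine_family G H).
Proof.
move=> Gt_neq0 n m /(congr1 (fun g : wrel D => g (nseq_tuple (wr_ar g) t))).
rewrite /= !ffunE !tnth_nseq => -[/addIr/(mulIf Gt_neq0)/eqP].
by rewrite eqr_nat eqSS => /eqP.
Qed.

Lemma Imp_wPol_affine_family (D : finType) (G H : D -> rat) :
  Imp (wPol (range (affine_family G H))) (unary_wrel G).
Proof.
move=> om [-> _ improves_om]; split=> [k f _ _ xs _|xs _].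
  by rewrite /feas /= ffunE.
set Pw := Pol _.
pose wsum F := \sum_(f : op D (w_ar om) | `[< Pw (w_ar om) f >])
  w_fn om f * F (tnth (apply_op f xs) ord0).
apply: (@natmul_bounded_le0 _ _ (wsum H)) => n.
have [_ /(_ xs) le0] := improves_om _ (ex_intro2 _ _ n I erefl).
apply: le_trans (le0 _); last by move=> i; rewrite /feas ffunE.
rewrite mulr_sumr -big_split /=; apply: ler_sum => f _.
by rewrite !ffunE /= mulrDr mulrCA.
Qed.

Definition collapse3 (t : 'I_3) : 'I_3 := if t == ord0 then ord0 else ord_max.
Definition to_zero3 (t : 'I_3) : 'I_3 := ord0.
Definition is_top3 (t : 'I_3) : rat := (t == ord_max)%:R.
Definition is_mid3 (t : 'I_3) : rat := (val t == 1)%:R.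

Lemma affine_family_near0 n :
  near0_mix_improves collapse3 to_zero3 (affine_family is_top3 is_mid3 n).
Proof.
have n_gt0 : 0 < n.+1%:R :> rat by rewrite ltr0n.
have inv_le1 : (n.+1%:R)^-1 <= 1 :> rat by rewrite invf_le1 // ler1n.
exists (n.+1%:R)^-1; first by rewrite invr_gt0 n_gt0.
move=> a /andP[a_ge0 a_le]; apply/mix_improves_unary => t.
have an_le1 : a * n.+1%:R <= 1.
  by rewrite -[leRHS](mulVf (lt0r_neq0 n_gt0)) ler_pM2r.
case: t => -[|[|[|//]]] ?; rewrite /collapse3 /to_zero3 /is_top3 /is_mid3 /=;
  rewrite ?mulr0 ?mulr1 ?addr0 //.
by rewrite -[leRHS]mul1r ler_pM2r // (le_trans a_le).
Qed.

Lemma not_near0_is_top3 :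
  ~ near0_mix_improves collapse3 to_zero3 (unary_wrel is_top3).
Proof.
move=> [e /andP[e_gt0 _] improves_e].
have /mix_improves_unary/(_ (@Ordinal 3 1 isT)) :
    mix_improves collapse3 to_zero3 e (unary_wrel is_top3).
  by apply: improves_e; rewrite (ltW e_gt0) lexx.
rewrite /collapse3 /to_zero3 /is_top3 /= mulr1 mulr0 addr0.
by rewrite leNgt e_gt0.
Qed.

Theorem lemma1 :
  exists (D : finType) (Gamma : set (wrel D)),
    ~ finite_set Gamma /\ Imp (wPol Gamma) <> wRelClone Gamma.
Proof.
exists ('I_3 : finType), (range (affine_family is_top3 is_mid3)); split.
  by apply/infinite_range_inj/(@affine_family_inj _ _ _ ord_max).
move=> Imp_eq_clone; apply: not_near0_is_top3.
have : wRelClone (range (affine_family is_top3 is_mid3)) (unary_wrel is_top3).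
  by rewrite -Imp_eq_clone; apply: Imp_wPol_affine_family.
apply; first exact: near0_mix_improves_clone.
by move=> _ [n _ <-]; apply: affine_family_near0.
Qed.
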